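(* Let $r\ge 2$ and $m$ be integers with $0\le 2m\le r$, $n=2r-4m$, and let $f:S^2(S^r(\mathbb{C}^2))\to S^{n}(\mathbb{C}^2)$ be an $\mathfrak{sl}_2(\mathbb{C})$-equivariant linear map, written $f=\sum_{k=0}^n q_k w_k$. Then there is $\lambda\in\mathbb{C}$ such that for all $0\le i,j\le r$, $$q_0(x_ix_j)=\begin{cases}(-1)^i\binom{2m}{i}\lambda & \text{if } j=2m-i,\\ 0&\text{otherwise.}\end{cases}$$ In particular, if $\lambda\in\mathbb{Q}$, then $q_k(x_ix_j)\in\mathbb{Q}$ for every $0\le k\le n$ and $0\le i,j\le r$.
   Context: $\mathfrak{sl}_2(\mathbb{C})$ has basis $X=\begin{pmatrix}0&1\\0&0\end{pmatrix}$, $H=\begin{pmatrix}1&0\\0&-1\end{pmatrix}$, $Y=\begin{pmatrix}0&0\\1&0\end{pmatrix}$, acting on the irreducible modules $S^d(\mathbb{C}^2)$. Let $x_0\in S^r(\mathbb{C}^2)$ be a highest weight vector and $x_i=Y^ix_0/i!$ ($0\le i\le r$), so $Yx_i=(i+1)x_{i+1}$, $Xx_i=(r-i+1)x_{i-1}$, $Hx_i=(r-2i)x_i$. Let $w_0\in S^n(\mathbb{C}^2)$ be a highest weight vector and $w_k=Y^kw_0/k!$ ($0\le k\le n$). Writing $f=\sum_{k=0}^n q_kw_k$ means $f(u)=\sum_k q_k(u)w_k$ for linear forms $q_k$ on $S^2(S^r(\mathbb{C}^2))$; $q_k(x_ix_j)$ denotes the value on the product $x_ix_j\in S^2(S^r(\mathbb{C}^2))$.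 *)

From HB Require Import structures.
From mathcomp Require Import all_boot all_order all_algebra.
Set Implicit Arguments. Unset Strict Implicit. Unset Printing Implicit Defensive.
Import Order.TTheory GRing.Theory Num.Theory.
Local Open Scope ring_scope.

(* The irreducible sl2-module S^d(C^2) is modelled on row vectors
   'rV[C]_(d.+1) of coordinates in the basis v_0, ..., v_d with
   v_i = Y^i v_0 / i!.  Operators act on the right: the row vector of
   coordinates of Z v_i is row i of the matrix (slY d), (slX d), (slH d). *)

Definition slY (C : numClosedFieldType) (d : nat) : 'M[C]_(d.+1) :=
  \matrix_(i < d.+1, j < d.+1) (if j == i.+1 :> nat then (i.+1)%:R else 0).

Definition slX (C : numClosedFieldType) (d : nat) : 'M[C]_(d.+1) :=
  \matrix_(i < d.+1, j < d.+1) (if j.+1 == i :> nat then ((d - i).+1)%:R else 0).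

Definition slH (C : numClosedFieldType) (d : nat) : 'M[C]_(d.+1) :=
  \matrix_(i < d.+1, j < d.+1) (if j == i then d%:R - 2 * i%:R else 0).

(* A linear map f : S^2(S^r(C^2)) -> S^n(C^2) is given by its values
   F i j = f(x_i x_j) (the coordinate vector (q_0(x_i x_j), ..., q_n(x_i x_j)))
   on the spanning products x_i x_j, subject to F i j = F j i.
   sl2 acts on S^2(V) by derivations: Z(x_i x_j) = (Z x_i) x_j + x_i (Z x_j). *)
Definition equiv_for (C : numClosedFieldType) (r n : nat)
  (F : 'I_r.+1 -> 'I_r.+1 -> 'rV[C]_n.+1) (Mr : 'M[C]_(r.+1)) (Mn : 'M[C]_(n.+1)) :=
  forall i j : 'I_r.+1,
    \sum_(l < r.+1) Mr i l *: F l j + \sum_(l < r.+1) Mr j l *: F i l = F i j *m Mn.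

(* f is a well-defined linear map on S^2(S^r(C^2)) which is sl2(C)-equivariant
   (X, H, Y span sl2(C)). *)
Definition sl2_equivariant_S2 (C : numClosedFieldType) (r n : nat)
  (F : 'I_r.+1 -> 'I_r.+1 -> 'rV[C]_n.+1) :=
  [/\ forall i j, F i j = F j i,
      equiv_for F (slX C r) (slX C n),
      equiv_for F (slH C r) (slH C n) &
      equiv_for F (slY C r) (slY C n)].

Definition is_rational (C : numClosedFieldType) (x : C) := exists q : rat, x = ratr q.

From HB Require Import structures.
From mathcomp Require Import all_boot all_order all_algebra.
From mathcomp Require Import zify ring.
Import Order.TTheory GRing.Theory Num.Theory.
Local Open Scope ring_scope.

(* H-equivariance forces f(x_i x_j) to have weight 2r - 2(i + j), so its
   lowest coordinate q_0 vanishes off the antidiagonal i + j = 2m.  On that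
   antidiagonal, the coordinate q_0 of Y-equivariance gives the two-term
   recurrence (t+1) a_{t+1} + (2m - t) a_t = 0 for a_t = q_0(x_t x_{2m-t}),
   solved by alternating binomial coefficients.  Finally X raises the index
   k of w_k, and X-equivariance expresses q_{k+1} rationally through q_k. *)

Lemma sum_ord_only {R : nmodType} {N} (i0 : 'I_N) (h : 'I_N -> R) :
  (forall l, l != i0 -> h l = 0) -> \sum_l h l = h i0.
Proof. by move=> h0; rewrite (bigD1 i0) //= big1 ?addr0 // => l /h0. Qed.

Lemma alternating_binomial_rec {R : numDomainType} {N : nat} (a : nat -> R) :
  (forall t, (t < N)%N -> t.+1%:R * a t.+1 + (N - t)%:R * a t = 0) ->
  forall t, (t <= N)%N -> a t = (-1) ^+ t * 'C(N, t)%:R * a 0%N.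
Proof.
move=> rec; elim=> [|t IH] ltN; first by rewrite bin0 expr0 !mul1r.
apply: (@mulfI _ t.+1%:R); first by rewrite pnatr_eq0.
have /eqP := rec t ltN; rewrite addr_eq0 => /eqP ->.
rewrite IH 1?ltnW //.
have -> : t.+1%:R * ((-1) ^+ t.+1 * 'C(N, t.+1)%:R * a 0%N) =
          - ((-1) ^+ t * (t.+1%:R * 'C(N, t.+1)%:R) * a 0%N) by rewrite exprS; ring.
by rewrite -!natrM mul_bin_left natrM; ring.
Qed.

Section RationalClosure.
Variable C : numClosedFieldType.

Lemma is_rational0 : is_rational (0 : C).
Proof. by exists 0; rewrite rmorph0. Qed.

Lemma is_rational_nat (k : nat) : is_rational (k%:R : C).
Proof. by exists k%:R; rewrite ratr_nat. Qed.

Lemma is_rationalD (x y : C) : is_rational x -> is_rational y -> is_rational (x + y).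
Proof. by move=> [a ->] [b ->]; exists (a + b); rewrite rmorphD. Qed.

Lemma is_rationalM (x y : C) : is_rational x -> is_rational y -> is_rational (x * y).
Proof. by move=> [a ->] [b ->]; exists (a * b); rewrite rmorphM. Qed.

Lemma is_rationalV (x : C) : is_rational x -> is_rational x^-1.
Proof. by move=> [a ->]; exists a^-1; rewrite fmorphV. Qed.

Lemma is_rational_sum N (h : 'I_N -> C) :
  (forall l, is_rational (h l)) -> is_rational (\sum_l h l).
Proof.
by move=> hQ; apply: big_ind => //; [exact: is_rational0 | exact: is_rationalD].
Qed.

Lemma is_rational_sign_bin (i N : nat) (x : C) :
  is_rational x -> is_rational ((-1) ^+ i * 'C(N, i)%:R * x).
Proof.
move=> xQ; apply: is_rationalM xQ.
by exists ((-1) ^+ i * 'C(N, i)%:R); rewrite rmorphM rmorphXn rmorphN1 ?rmorph_nat.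
Qed.

End RationalClosure.

Section EquivariantCoordinates.
Context {C : numClosedFieldType} {r n : nat} {F : 'I_r.+1 -> 'I_r.+1 -> 'rV[C]_n.+1}.

Hypothesis equivX : equiv_for F (slX C r) (slX C n).
Hypothesis equivH : equiv_for F (slH C r) (slH C n).
Hypothesis equivY : equiv_for F (slY C r) (slY C n).

Lemma slH_weight i j (k : 'I_n.+1) :
  F i j 0 k != 0 -> (n + 2 * i + 2 * j = r + r + 2 * k)%N.
Proof.
move=> nz; have /(congr1 (fun M : 'rV[C]_n.+1 => M 0 k)) := equivH i j.
rewrite !mxE !summxE.
rewrite (sum_ord_only i); last by move=> l /negbTE hl; rewrite !mxE hl mul0r.
rewrite (sum_ord_only j); last by move=> l /negbTE hl; rewrite !mxE hl mul0r.
rewrite (sum_ord_only k); last by move=> l /negbTE hl; rewrite !mxE eq_sym hl mulr0.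
rewrite !mxE !eqxx -mulrDl mulrC => /(mulfI nz) eigen.
apply/eqP; rewrite -(eqr_nat C) !natrD -subr_eq0; apply/eqP.
by rewrite -[RHS](subrr (n%:R - 2 * k%:R)) -{2}eigen; ring.
Qed.

Lemma slY_lowest (i j : 'I_r.+1) : (i < r)%N -> (j < r)%N ->
  i.+1%:R * F (inord i.+1) j 0 ord0 + j.+1%:R * F i (inord j.+1) 0 ord0 = 0.
Proof.
move=> ltir ltjr; have /(congr1 (fun M : 'rV[C]_n.+1 => M 0 ord0)) := equivY i j.
rewrite !mxE !summxE.
have slY_succ (h : 'I_r.+1) l : (h < r)%N -> l != inord h.+1 -> slY C r h l = 0.
  move=> lthr ne; rewrite mxE; case: eqP => // e.
  by case/eqP: ne; apply: val_inj; rewrite /= e inordK.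
rewrite (sum_ord_only (inord i.+1)) => [|l /(slY_succ _ _ ltir) ->]; last first.
  by rewrite scale0r mxE.
rewrite (sum_ord_only (inord j.+1)) => [|l /(slY_succ _ _ ltjr) ->]; last first.
  by rewrite scale0r mxE.
rewrite big1 => [|l _]; last by rewrite !mxE mulr0.
by rewrite !mxE !inordK // !eqxx.
Qed.

Lemma slX_raise i j (k : 'I_n.+1) : (k < n)%N ->
  (n - k)%:R * F i j 0 (inord k.+1) =
  \sum_l slX C r i l * F l j 0 k + \sum_l slX C r j l * F i l 0 k.
Proof.
move=> ltkn; have /(congr1 (fun M : 'rV[C]_n.+1 => M 0 k)) := equivX i j.
rewrite !mxE !summxE.
under eq_bigr do rewrite mxE; under [X in _ + X]eq_bigr do rewrite mxE.
move=> ->; rewrite (sum_ord_only (inord k.+1)) => [|l ne]; last first.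
  rewrite mxE; case: eqP; rewrite ?mulr0 // => e.
  by case/eqP: ne; apply: val_inj; rewrite /= -e inordK.
by rewrite mxE inordK // eqxx subnSK // mulrC.
Qed.

Lemma slX_rational : (forall i j, is_rational (F i j 0 ord0)) ->
  forall (k : 'I_n.+1) i j, is_rational (F i j 0 k).
Proof.
move=> rat0 k; rewrite -(inord_val k); move: (ltn_ord k).
elim: (val k) => [|t IH] ltt i j.
  by have -> : inord 0 = ord0 :> 'I_n.+1 by apply: val_inj; rewrite /= inordK.
have ltn : ((inord t : 'I_n.+1) < n)%N by rewrite inordK // ltnW.
have nz : (n - (inord t : 'I_n.+1))%:R != 0 :> C by rewrite pnatr_eq0 -lt0n subn_gt0.
have slX_Q a b : is_rational (slX C r a b).
  by rewrite mxE; case: ifP => _; [exact: is_rational_nat | exact: is_rational0].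
have -> : inord t.+1 = inord (inord t : 'I_n.+1).+1 :> 'I_n.+1 by rewrite inordK // ltnW.
rewrite -[F _ _ _ _](mulKf nz) slX_raise //.
apply: is_rationalM; first exact/is_rationalV/is_rational_nat.
by apply: is_rationalD; apply: is_rational_sum => l; apply: is_rationalM => //;
  apply: IH; rewrite ltnW.
Qed.

Lemma lowest_coord_antidiagonal m : n = (2 * r - 4 * m)%N -> (2 * m <= r)%N ->
  forall i j : 'I_r.+1, F i j 0 ord0 =
    if (i + j == 2 * m)%N
    then (-1) ^+ i * 'C(2 * m, i)%:R * F ord0 (inord (2 * m)) 0 ord0 else 0.
Proof.
move=> hn hm i j.
pose a t := F (inord t) (inord (2 * m - t)) 0 ord0.
have a_rec t : (t < 2 * m)%N -> t.+1%:R * a t.+1 + (2 * m - t)%:R * a t = 0.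
  move=> ltt; have := @slY_lowest (inord t) (inord (2 * m - t.+1)).
  by rewrite !inordK ?subnSK //; try lia; apply; lia.
have a_closed := alternating_binomial_rec a a_rec.
case: eqP => [sum_ij | ne_ij].
  have -> : F i j = F (inord i) (inord (2 * m - i)).
    by congr F; apply: val_inj; rewrite /= inordK //; lia.
  rewrite -/(a i) a_closed; last by lia.
  by rewrite /a subn0; congr (_ * F _ _ 0 ord0); apply: val_inj; rewrite /= inordK.
apply/eqP; apply: contraT => /slH_weight /=; lia.
Qed.

End EquivariantCoordinates.

Theorem mainTheorem2 (C : numClosedFieldType) (r m n : nat)
  (hr : (2 <= r)%N) (hm : (2 * m <= r)%N) (hn : n = (2 * r - 4 * m)%N)
  (F : 'I_r.+1 -> 'I_r.+1 -> 'rV[C]_n.+1)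
  (hF : sl2_equivariant_S2 F) :
  exists lambda : C,
    (forall i j : 'I_r.+1,
        F i j 0 ord0 =
        (if (i + j == 2 * m)%N then (-1) ^+ i * ('C(2 * m, i))%:R * lambda else 0))
    /\ (is_rational lambda ->
        forall (k : 'I_n.+1) (i j : 'I_r.+1), is_rational (F i j 0 k)).
Proof.
case: hF => _ equivX equivH equivY.
have lowest := lowest_coord_antidiagonal equivH equivY _ hn hm.
exists (F ord0 (inord (2 * m)) 0 ord0); split => // lambdaQ.
apply: slX_rational equivX _ => i j; rewrite lowest.
by case: ifP => _; [exact: is_rational_sign_bin | exact: is_rational0].
Qed.
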